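(* Let $P$ be a $q$-central probability measure on $(\Omega,\mathcal{C})$, let $N\ge1$ and $\gamma\in\mathfrak{S}_N$. For $\lambda\in\mathrm{Sign}_N$ let $\gamma_\lambda$ be the permutation of the set of finite paths from $*$ to $\lambda$ such that $\gamma((\omega_n)_{n=1}^\infty)=(\gamma_\lambda((\omega_n)_{n=1}^N),\omega_{N+1},\dots)$ whenever the edge $\omega_N$ ends at $\lambda$. Then \[\frac{dP\circ\gamma}{dP}=\sum_{\lambda\in\mathrm{Sign}_N}\sum_{\alpha}\frac{w(\gamma_\lambda(\alpha))}{w(\alpha)}1_{C_\alpha},\] where $\alpha$ runs over finite paths from $*$ to $\lambda$. In particular, $r(\Omega,\mathcal{C},P,\mathfrak{S})\subseteq\{q^{2n}\mid n\in\mathbb{Z}\}\cup\{0\}$.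
   Context: Fix $q\in(0,1)$. Gelfand--Tsetlin graph: for $N\ge1$ let $\mathrm{Sign}_N=\{\lambda\in\mathbb{Z}^N\mid \lambda_1\ge\cdots\ge\lambda_N\}$, $\mathrm{Sign}_0=\{*\}$, $|\lambda|=\lambda_1+\cdots+\lambda_N$. For $\mu\in\mathrm{Sign}_{N-1}$, $\lambda\in\mathrm{Sign}_N$ write $\mu\prec\lambda$ if $\lambda_1\ge\mu_1\ge\lambda_2\ge\cdots\ge\mu_{N-1}\ge\lambda_N$ (with $*\prec\lambda$ for all $\lambda\in\mathrm{Sign}_1$). Edges of level $N$ are pairs $[\mu,\lambda]$ with $\mu\prec\lambda$, source $\mu$, range $\lambda$; a path is a sequence of edges with the range of each equal to the source of the next. Weight: $w([\mu,\lambda])=q^{N|\mu|-(N-1)|\lambda|}$ for a level-$N$ edge; $w$ of a finite path is the product of its edge weights. $\dim_q(\lambda)=\sum_\alpha w(\alpha)$ over finite paths $\alpha$ from $*$ to $\lambda$. $\Omega$ is the set of infinite paths from $*$; $C_\alpha=\{\omega\in\Omega\mid\omega_n=e_n,\ n\le N\}$ for a finite path $\alpha=(e_n)_{n=1}^N$ from $*$; $\mathcal{C}$ is generated by cylinder sets. $P$ is $q$-central if $P(C_\alpha)/w(\alpha)=P(\{\omega\mid r(\omega_N)=\lambda\})/\dim_q(\lambda)$ for all $\lambda\in\mathrm{Sign}_N$ and finite paths $\alpha$ from $*$ to $\lambda$. For $\lambda\in\mathrm{Sign}_N$, each permutation $\gamma_0$ of the finite paths from $*$ to $\lambda$ acts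 on $\Omega$ by $\gamma(\omega)=(\gamma_0(\omega_1,\dots,\omega_N),\omega_{N+1},\dots)$ if $\omega_N$ ends at $\lambda$, $\gamma(\omega)=\omega$ otherwise; $\mathfrak{S}_N$ is generated by these for all $\lambda\in\mathrm{Sign}_N$, $\mathfrak{S}=\bigcup_N\mathfrak{S}_N$ ($q$-central measures are $\mathfrak{S}$-quasi-invariant). The full group $[\mathfrak{S}]$ consists of measurable $\gamma$ agreeing pointwise with some element of $\mathfrak{S}$ at each point. The ratio set $r(\Omega,\mathcal{C},P,\mathfrak{S})$ is the set of $r\in[0,\infty)$ such that for every $\epsilon>0$ and $A\in\mathcal{C}$ with $P(A)>0$ there exist $B\in\mathcal{C}$, $\gamma\in[\mathfrak{S}]$ with $P(B)>0$, $B\subseteq A$, $\gamma(B)\subseteq A$ and $|\frac{dP\circ\gamma}{dP}-r|<\epsilon$ a.e. on $B$. *)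

From HB Require Import structures.
From mathcomp Require Import all_boot all_order all_algebra.
From mathcomp Require Import all_classical all_reals all_analysis.
Set Implicit Arguments. Unset Strict Implicit. Unset Printing Implicit Defensive.
Import Order.TTheory GRing.Theory Num.Theory.
Local Open Scope classical_set_scope.
Local Open Scope ring_scope.

(* signatures: a signature of length N is a non-increasing seq of N ints;
   Sign_0 = {[::]} and [::] plays the role of the root * . *)
Definition is_sign (N : nat) (l : seq int) : bool :=
  (size l == N) && sorted (fun a b : int => b <= a) l.

Definition interlace (mu l : seq int) : bool :=
  (size l == (size mu).+1) &&
  all (fun i => (nth 0 mu i <= nth 0 l i) && (nth 0 l i.+1 <= nth 0 mu i))
      (iota 0 (size mu)).

Definition gt_edge (mu l : seq int) : bool :=
  [&& is_sign (size mu) mu, is_sign (size l) l & interlace mu l].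

Definition absl (l : seq int) : int := \sum_(x <- l) x.

Definition wedge (R : realType) (q : R) (mu l : seq int) : R :=
  let N := size l in
  q ^ ((N%:Z * absl mu - (N%:Z - 1) * absl l)%R).

(* A finite path from * of length N is encoded by its sequence of vertices
   [:: l_1; ...; l_N] (l_0 = * = [::] is implicit). *)
Definition edges_of (a : seq (seq int)) : seq (seq int * seq int) :=
  zip (belast [::] a) a.

Definition fin_path_to (N : nat) (l : seq int) (a : seq (seq int)) : bool :=
  [&& size a == N, path gt_edge [::] a & last [::] a == l].

Definition paths_to (N : nat) (l : seq int) : set (seq (seq int)) :=
  [set a | fin_path_to N l a].

Definition wpath (R : realType) (q : R) (a : seq (seq int)) : R :=
  \prod_(e <- edges_of a) wedge q e.1 e.2.

Definition dimq (R : realType) (q : R) (l : seq int) : R :=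
  \sum_(a \in paths_to (size l) l) wpath q a.

Definition is_inf_path (v : nat -> seq int) : Prop :=
  v 0%N = [::] /\ forall n, gt_edge (v n) (v n.+1).

Record Omega := MkOmega { vert : nat -> seq int; vertP : is_inf_path vert }.

Lemma zero_path : is_inf_path (fun n => nseq n (0 : int)).
Proof.
split => // n; rewrite /gt_edge /is_sign /interlace !size_nseq !eqxx /=.
apply/ssrbool.and3P; split.
- by case: n => // n /=; elim: n => //= n ->; rewrite lexx.
- by elim: n => //= n ->; rewrite lexx.
- apply/allP => i; rewrite mem_iota add0n => Hi.
  rewrite -[0 :: nseq n 0]/(nseq n.+1 0) !nth_nseq !if_same.
  by rewrite lexx.
Qed.

HB.instance Definition _ := gen_eqMixin Omega.
HB.instance Definition _ := gen_choiceMixin Omega.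
HB.instance Definition _ := isPointed.Build Omega (MkOmega zero_path).

Definition prefix (w : Omega) (N : nat) : seq (seq int) :=
  mkseq (fun i => vert w i.+1) N.

Definition cyl (a : seq (seq int)) : set Omega :=
  [set w | prefix w (size a) = a].

Definition cylinders : set (set Omega) :=
  [set C | exists N l a, is_sign N l /\ fin_path_to N l a /\ C = cyl a].

Definition OmegaC := g_sigma_algebraType cylinders.

Definition ends_at (N : nat) (l : seq int) : set OmegaC :=
  [set w : Omega | vert w N = l].

Definition q_central (R : realType) (q : R) (P : probability OmegaC R) : Prop :=
  forall N l a, is_sign N l -> fin_path_to N l a ->
    fine (P (cyl a : set OmegaC)) / wpath q a
    = fine (P (ends_at N l)) / dimq q l.

Definition acts_on_level (N : nat) (l : seq int)
  (s : seq (seq int) -> seq (seq int)) (g : Omega -> Omega) : Prop :=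
  forall w, vert w N = l ->
    prefix (g w) N = s (prefix w N) /\
    (forall i, (N < i)%N -> vert (g w) i = vert w i).

Definition generator (N : nat) (g : Omega -> Omega) : Prop :=
  exists l s, is_sign N l /\ set_bij (paths_to N l) (paths_to N l) s /\
              acts_on_level N l s g /\ (forall w, vert w N <> l -> g w = w).

Inductive SN (N : nat) : (Omega -> Omega) -> Prop :=
| SN_id : SN N id
| SN_gen g : generator N g -> SN N g
| SN_comp g h : SN N g -> SN N h -> SN N (g \o h)
| SN_inv g h : SN N g -> (forall w, g (h w) = w) -> (forall w, h (g w) = w) ->
               SN N h.

Definition in_S (g : Omega -> Omega) : Prop := exists N, SN N g.

Definition full_group (g : OmegaC -> OmegaC) : Prop :=
  measurable_fun setT g /\ forall w, exists h, in_S h /\ g w = h w.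

(* f is (a version of) the Radon--Nikodym derivative d(P o g)/dP *)
Definition is_RN_deriv (R : realType) (P : probability OmegaC R)
  (g : OmegaC -> OmegaC) (f : OmegaC -> R) : Prop :=
  measurable_fun setT f /\ (forall w, 0 <= f w) /\
  forall E : set OmegaC, measurable E ->
    P (g @` E) = (\int[P]_(x in E) (f x)%:E)%E.

Definition ratio_set (R : realType) (P : probability OmegaC R) : set R :=
  [set r | 0 <= r /\
    forall eps : R, 0 < eps ->
    forall A : set OmegaC, measurable A -> (0 < P A)%E ->
    exists (B : set OmegaC) (g : OmegaC -> OmegaC) (f : OmegaC -> R),
      measurable B /\ (0 < P B)%E /\ B `<=` A /\ full_group g /\
      g @` B `<=` A /\ is_RN_deriv P g f /\
      {ae P, forall x, B x -> `|f x - r| < eps}].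

(* An element of S_N acts on a path by replacing its first N edges with their
   image under a bijection F of the finite paths of length N that fixes their
   endpoint.  By q-centrality P(C_b) is proportional to w(b) among the paths b
   of a given length and endpoint, so the image of P under such a relabelling
   and the measure with density w(F(alpha))/w(alpha) on C_alpha agree on all
   cylinders of length at least N.  These form a pi-system generating C, hence
   the two measures coincide: this is the formula for dP o gamma / dP.

   For paths a, b of the same length and endpoint, w(b)/w(a) = q^(2n) with
   n = sum_i |b_i| - sum_i |a_i|.  An element of the full group agrees, on the
   pieces of a countable measurable cover, with relabellings that swap two such
   paths, so its derivative is a power q^(2n) on each piece.  A ratio r > 0 that
   is no such power is at positive distance from all of them, and averaging the
   derivative over a piece of positive measure gives a contradiction. *)

From Pilot Require Import Defs.
From HB Require Import structures.
From mathcomp Require Import all_boot all_order all_algebra.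
From mathcomp Require Import all_classical all_reals all_analysis.
From mathcomp Require Import measurable_realfun zify ring.
Import Order.TTheory GRing.Theory Num.Theory.
Local Open Scope classical_set_scope.
Local Open Scope ring_scope.
Set Implicit Arguments. Unset Strict Implicit. Unset Printing Implicit Defensive.
Local Notation prefix := Defs.prefix.

Definition gt_path (b : seq (seq int)) : bool := path gt_edge [::] b.

Lemma gt_edge_size x y : gt_edge x y -> size y = (size x).+1.
Proof. by case/and3P => _ _ /andP [/eqP]. Qed.

Lemma size_last_path x b : path gt_edge x b -> size (last x b) = (size x + size b)%N.
Proof.
elim: b x => [|y b IH] x /=; first by rewrite addn0.
by case/andP => /gt_edge_size e /IH ->; rewrite e addSnnS.
Qed.

Lemma gt_path_sign b : gt_path b -> is_sign (size b) (last [::] b).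
Proof.
case/lastP: b => [|b y] //; rewrite /gt_path => pb.
have := size_last_path pb; rewrite last_rcons /= add0n => <-.
by move: pb; rewrite rcons_path => /andP [_ /and3P [_ ]].
Qed.

Lemma gt_path_paths_to b : gt_path b -> paths_to (size b) (last [::] b) b.
Proof. by move=> pb; apply/and3P. Qed.

Lemma paths_toP K l b :
  paths_to K l b -> [/\ gt_path b, size b = K & last [::] b = l].
Proof. by case/and3P => /eqP ? ? /eqP ?. Qed.

Lemma gt_path_take n b : gt_path b -> gt_path (take n b).
Proof. by rewrite /gt_path -{1}(cat_take_drop n b) cat_path => /andP []. Qed.

Lemma gt_path_drop n b : gt_path b -> path gt_edge (last [::] (take n b)) (drop n b).
Proof. by rewrite /gt_path -{1}(cat_take_drop n b) cat_path => /andP []. Qed.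

Lemma size_Omega_prefix w n : size (prefix w n) = n.
Proof. exact: size_mkseq. Qed.

Lemma nth_prefix w n i d : (i < n)%N -> nth d (prefix w n) i = vert w i.+1.
Proof. exact: nth_mkseq. Qed.

Lemma vert0 w : vert w 0 = [::].
Proof. exact: (vertP w).1. Qed.

Lemma gt_edge_vert w n : gt_edge (vert w n) (vert w n.+1).
Proof. exact: (vertP w).2. Qed.

Lemma last_prefix w n : last [::] (prefix w n) = vert w n.
Proof.
case: n => [|n]; first by rewrite vert0.
by rewrite -nth_last size_Omega_prefix nth_prefix.
Qed.

Lemma prefixS w n : prefix w n.+1 = rcons (prefix w n) (vert w n.+1).
Proof. by rewrite /Defs.prefix /mkseq -addn1 iotaD map_cat -cats1 add0n addn1. Qed.

Lemma gt_path_prefix w n : gt_path (prefix w n).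
Proof.
elim: n => [|n IH] //; move: IH; rewrite prefixS /gt_path rcons_path => ->.
by rewrite last_prefix gt_edge_vert.
Qed.

Lemma take_prefix m n w : (m <= n)%N -> take m (prefix w n) = prefix w m.
Proof. by move=> h; rewrite /Defs.prefix /mkseq -map_take take_iota (minn_idPl h). Qed.

Lemma cyl_prefix w n : cyl (prefix w n) w.
Proof. by rewrite /cyl /= size_Omega_prefix. Qed.

Lemma Omega_ext (w w' : Omega) : vert w =1 vert w' -> w = w'.
Proof.
case: w w' => v vP [v' vP'] /= /funext E; subst v'.
by congr MkOmega; exact: Prop_irrelevance.
Qed.

(** * Relabelling the beginning of a path *)

Definition graft_vert (K : nat) (b : seq (seq int)) (w : Omega) (i : nat) :=
  if (i <= K)%N then nth [::] ([::] :: b) i else vert w i.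

Lemma graft_vert_inf_path K b w : gt_path b -> size b = K ->
  last [::] b = vert w K -> is_inf_path (graft_vert K b w).
Proof.
move=> pb sb lb; split => [|n]; first by rewrite /graft_vert.
rewrite /graft_vert; case: (ltngtP n K) => h.
- by move/pathP: pb => /(_ [::] n); rewrite sb => /(_ h).
- exact: gt_edge_vert.
- by rewrite h -sb -(last_nth [::]) lb sb; exact: gt_edge_vert.
Qed.

(* Falls back to [w] when [b] is not a path of length [K] ending at [vert w K]. *)
Definition graft K b w : Omega :=
  match pselect (is_inf_path (graft_vert K b w)) with
  | left H => MkOmega H
  | right _ => w
  end.

Lemma vert_graft K b w : gt_path b -> size b = K -> last [::] b = vert w K ->
  vert (graft K b w) = graft_vert K b w.
Proof.
move=> pb sb lb; rewrite /graft; case: pselect => // H.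
by case: H; exact: graft_vert_inf_path.
Qed.

Section Relabel.
Variable K : nat.
Implicit Types F G : seq (seq int) -> seq (seq int).

Definition level_preserving F := forall b, gt_path b -> size b = K ->
  [/\ gt_path (F b), size (F b) = K & last [::] (F b) = last [::] b].

Definition level_bijection F G := [/\ level_preserving F, level_preserving G,
  forall b, gt_path b -> size b = K -> G (F b) = b &
  forall b, gt_path b -> size b = K -> F (G b) = b].

Definition relabel F (w : Omega) : Omega := graft K (F (prefix w K)) w.

Lemma vert_relabel F w : level_preserving F ->
  vert (relabel F w) = graft_vert K (F (prefix w K)) w.
Proof.
move=> hF; have [pF sF lF] := hF _ (gt_path_prefix w K) (size_Omega_prefix w K).
by apply: vert_graft; rewrite ?lF ?last_prefix.
Qed.

Lemma prefix_relabel F w M : level_preserving F ->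
  prefix (relabel F w) M = take M (F (prefix w K)) ++ drop K (prefix w M).
Proof.
move=> hF; have [_ sF _] := hF _ (gt_path_prefix w K) (size_Omega_prefix w K).
apply: (@eq_from_nth _ [::]).
  by rewrite size_cat size_take size_drop !size_Omega_prefix sF; case: (ltnP M K) => ?; lia.
move=> i; rewrite size_Omega_prefix => iM.
rewrite nth_prefix // vert_relabel // /graft_vert nth_cat size_take sF.
case: (leqP i.+1 K) => iK.
  have -> : (i < (if (M < K)%N then M else K))%N by case: (ltnP M K) => ? /=; lia.
  by rewrite nth_take.
have -> : (M < K)%N = false by lia.
have -> : (i < K)%N = false by lia.
rewrite nth_drop nth_prefix; [congr vert; lia | lia].
Qed.

Lemma relabel_prefix F w : level_preserving F ->
  prefix (relabel F w) K = F (prefix w K).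
Proof.
move=> hF; have [_ sF _] := hF _ (gt_path_prefix w K) (size_Omega_prefix w K).
by rewrite prefix_relabel // take_oversize ?sF // drop_oversize ?size_Omega_prefix ?cats0.
Qed.

Lemma level_preserving_comp F G :
  level_preserving F -> level_preserving G -> level_preserving (G \o F).
Proof.
move=> hF hG b pb sb; have [pF sF lF] := hF _ pb sb.
by have [? ? lG] := hG _ pF sF; rewrite /= lG.
Qed.

Lemma relabel_comp F G w : level_preserving F -> level_preserving G ->
  relabel G (relabel F w) = relabel (G \o F) w.
Proof.
move=> hF hG; apply: Omega_ext => i.
rewrite !vert_relabel ?relabel_prefix //; last exact: level_preserving_comp.
by rewrite /graft_vert; case: leqP => // iK; rewrite vert_relabel // /graft_vert leqNgt iK.
Qed.

Lemma relabel_id F w : (forall b, gt_path b -> size b = K -> F b = b) ->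
  relabel F w = w.
Proof.
move=> idb; have hF : level_preserving F by move=> b pb sb; rewrite idb.
apply: Omega_ext => i; rewrite vert_relabel // idb ?gt_path_prefix ?size_Omega_prefix //.
rewrite /graft_vert; case: leqP => // iK; case: i iK => [|i] iK /=.
  by rewrite vert0.
by rewrite nth_prefix.
Qed.

Lemma relabelK F G : level_bijection F G -> cancel (relabel F) (relabel G).
Proof.
by case=> hF hG GF _ w; rewrite relabel_comp // relabel_id.
Qed.

Lemma relabel_image F G (E : set Omega) : level_bijection F G ->
  relabel F @` E = relabel G @^-1` E.
Proof.
move=> hFG; have [hF hG GF FG] := hFG.
have hGF : level_bijection G F by [].
apply/seteqP; split => [_ [w Ew <-]|w Ew] /=; first by rewrite relabelK.
by exists (relabel G w); rewrite ?relabelK.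
Qed.

Lemma relabelE F (h : Omega -> Omega) : level_preserving F ->
  (forall w, prefix (h w) K = F (prefix w K) /\
     forall i, (K < i)%N -> vert (h w) i = vert w i) -> h = relabel F.
Proof.
move=> hF H; apply: funext => w; apply: Omega_ext => i.
have [hK hi] := H w; rewrite vert_relabel // /graft_vert; case: leqP => iK.
  case: i iK => [|i] iK; first by rewrite !vert0.
  by rewrite -(nth_prefix _ [::] iK) hK.
exact: hi.
Qed.

End Relabel.

(** * Measurability *)

Lemma countable_bigcup_measurable d (T : measurableType d) (U : countType)
    (D : set U) (F : U -> set T) :
  (forall i, D i -> measurable (F i)) -> measurable (\bigcup_(i in D) F i).
Proof.
move=> mF; rewrite bigcup_mkcond.
apply: countable_bigcupT_measurable; first exact: countableP.
by move=> i; case: ifPn => [/set_mem/mF|_] //; exact: measurable0.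
Qed.

Lemma cyl_non_path b : ~~ gt_path b -> cyl b = set0.
Proof.
by move=> npb; apply/seteqP; split => // w /= pw; move: npb; rewrite -pw gt_path_prefix.
Qed.

Lemma measurable_cyl b : measurable (cyl b : set OmegaC).
Proof.
have [pb|npb] := boolP (gt_path b); last by rewrite cyl_non_path.
apply: sub_sigma_algebra; exists (size b), (last [::] b), b.
by split; [exact: gt_path_sign | split; [exact: gt_path_paths_to|]].
Qed.

Lemma prefix_setE K (Q : seq (seq int) -> Prop) :
  [set w : Omega | Q (prefix w K)] = \bigcup_(b in [set b | Q b /\ size b = K]) cyl b.
Proof.
apply/seteqP; split => w /=.
  by move=> Qw; exists (prefix w K); [rewrite /= size_Omega_prefix | exact: cyl_prefix].
by case=> b [Qb <-] /= ->.
Qed.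

Lemma measurable_prefix_set K (Q : seq (seq int) -> Prop) :
  measurable [set w : OmegaC | Q (prefix w K)].
Proof.
by rewrite prefix_setE; apply: countable_bigcup_measurable => b _; exact: measurable_cyl.
Qed.

Lemma measurable_fun_prefix d (T : measurableType d) K (h : seq (seq int) -> T) :
  measurable_fun setT (fun w : OmegaC => h (prefix w K)).
Proof. by move=> _ Y _; rewrite setTI; exact: (measurable_prefix_set K (fun p => Y (h p))). Qed.

Lemma measurable_relabel K F : level_preserving K F ->
  measurable_fun setT (relabel K F : OmegaC -> OmegaC).
Proof.
move=> hF; apply: (@measurability _ _ OmegaC OmegaC _ _ cylinders erefl).
move=> _ [_ [N [l [a [_ [_ ->]]]]] <-]; rewrite setTI.
pose Q p := take (size a) (F (take K p)) ++ drop K (take (size a) p) = a.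
suff -> : relabel K F @^-1` cyl a = [set w | Q (prefix w (maxn (size a) K))].
  exact: measurable_prefix_set.
apply/seteqP; split => w;
  by rewrite /cyl /Q /= prefix_relabel // !take_prefix ?leq_maxl ?leq_maxr.
Qed.

Lemma measurable_eq_fun (g1 g2 : OmegaC -> OmegaC) :
  measurable_fun setT g1 -> measurable_fun setT g2 ->
  measurable [set w : OmegaC | g1 w = g2 w].
Proof.
move=> mg1 mg2.
have -> : [set w : OmegaC | g1 w = g2 w] = \bigcap_M
    \bigcup_(c in [set c | size c = M]) (g1 @^-1` cyl c `&` g2 @^-1` cyl c).
  apply/seteqP; split => w /=.
    move=> e M _; exists (prefix (g1 w) M); rewrite /= ?size_Omega_prefix //.
    by rewrite -e; split; exact: cyl_prefix.
  move=> h; apply: Omega_ext => i; rewrite -!last_prefix.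
  by have [c /= sc [/=]] := h i I; rewrite /cyl /= sc => -> ->.
apply: bigcapT_measurable => M; apply: countable_bigcup_measurable => c _.
apply: measurableI; rewrite -[X in measurable X]setTI.
- exact: mg1 (measurable_cyl c).
- exact: mg2 (measurable_cyl c).
Qed.

Section Weights.
Variables (R : realType) (q : R).
Hypothesis q_gt0 : 0 < q.

Definition wpath_from (x : seq int) (t : seq (seq int)) : R :=
  \prod_(e <- zip (belast x t) t) wedge q e.1 e.2.

Lemma wpath_fromE a : wpath q a = wpath_from [::] a.
Proof. by []. Qed.

Lemma wpath_from_cat x s t :
  wpath_from x (s ++ t) = wpath_from x s * wpath_from (last x s) t.
Proof. by rewrite /wpath_from belast_cat zip_cat ?size_belast // big_cat. Qed.

Lemma wpath_from_gt0 x t : 0 < wpath_from x t.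
Proof. by apply: prodr_gt0 => e _; exact: exprz_gt0. Qed.

Lemma wpath_gt0 a : 0 < wpath q a.
Proof. exact: wpath_from_gt0. Qed.

Lemma wpath_cat_ratio s s' t : last [::] s' = last [::] s ->
  wpath q (s' ++ t) / wpath q (s ++ t) = wpath q s' / wpath q s.
Proof.
move=> ls; rewrite !wpath_fromE !wpath_from_cat ls.
have s0 := lt0r_neq0 (wpath_from_gt0 [::] s).
have t0 := lt0r_neq0 (wpath_from_gt0 (last [::] s) t).
by field; rewrite s0 t0.
Qed.

(* The exponents [n |l_(n-1)| - (n-1) |l_n|] of the edges telescope. *)
Definition wpath_exponent (b : seq (seq int)) : int :=
  2 * (\sum_(x <- b) absl x) - (size b + 1)%:Z * absl (last [::] b).

Lemma wpathE b : gt_path b -> wpath q b = q ^ wpath_exponent b.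
Proof.
elim/last_ind: b => [|b y IH]; first by rewrite /wpath /wpath_exponent /absl !big_nil mulr0 subr0.
rewrite /gt_path rcons_path => /andP [pb e].
rewrite wpath_fromE -cats1 wpath_from_cat -wpath_fromE IH //.
rewrite /wpath_from /= big_cons big_nil mulr1 /wedge /= -expfzDr ?gt_eqF //.
have sy : size y = (size b).+1 by rewrite (gt_edge_size e) (size_last_path pb).
rewrite /wpath_exponent cats1 big_rcons /= last_rcons size_rcons sy.
by congr (q ^ _); rewrite -[(size b).+1]addn1 PoszD; ring.
Qed.

Lemma wpath_ratio b c : gt_path b -> gt_path c -> size b = size c ->
  last [::] b = last [::] c ->
  wpath q c / wpath q b = q ^ (2 * (\sum_(x <- c) absl x - \sum_(x <- b) absl x)).
Proof.
move=> pb pc sbc lbc; rewrite !wpathE //.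
have -> : wpath_exponent c =
    2 * (\sum_(x <- c) absl x - \sum_(x <- b) absl x) + wpath_exponent b.
  by rewrite /wpath_exponent sbc lbc; ring.
by rewrite expfzDr ?gt_eqF // mulfK // gt_eqF // exprz_gt0.
Qed.

Lemma q_central_cyl (P : probability OmegaC R) : q_central q P ->
  forall b c, gt_path b -> gt_path c -> size b = size c ->
  last [::] b = last [::] c ->
  P (cyl c) = ((wpath q c / wpath q b)%:E * P (cyl b))%E.
Proof.
move=> hP b c pb pc sbc lbc.
have hb := hP _ _ _ (gt_path_sign pb) (gt_path_paths_to pb).
have hc := hP _ _ _ (gt_path_sign pc) (gt_path_paths_to pc).
rewrite -sbc -lbc -hb in hc.
have b0 := lt0r_neq0 (wpath_gt0 b); have c0 := lt0r_neq0 (wpath_gt0 c).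
rewrite -[LHS](fineK (fin_num_measure P _ (measurable_cyl c))).
rewrite -[in RHS](fineK (fin_num_measure P _ (measurable_cyl b))) -EFinM.
by rewrite -[fine _](divfK c0) hc; congr EFin; field; rewrite b0.
Qed.

End Weights.

(** * The image of a q-central measure under a relabelling *)

Section LevelCylinders.
Variable K : nat.

Definition level_cylinders : set (set OmegaC) :=
  [set C | C = set0 \/ exists b, [/\ gt_path b, (K <= size b)%N & C = cyl b]].

Lemma cylI b c : (size b <= size c)%N ->
  cyl b `&` cyl c = if take (size b) c == b then cyl c else set0.
Proof.
move=> bc; apply/seteqP; split => w.
  rewrite /cyl /= => -[wb wc].
  by have -> : take (size b) c == b by rewrite -wc take_prefix // wb.
case: ifP => [/eqP cb|_ []] wc; split => //.
by rewrite /cyl /= -(take_prefix w bc) wc cb.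
Qed.

Lemma level_cylinders_setI : setI_closed level_cylinders.
Proof.
move=> A B [->|[b [pb Kb ->]]]; first by left; rewrite set0I.
move=> [->|[c [pc Kc ->]]]; first by left; rewrite setI0.
wlog bc : b c pb pc Kb Kc / (size b <= size c)%N.
  move=> W; case: (leqP (size b) (size c)) => h; first exact: W.
  by rewrite setIC; apply: W => //; exact: ltnW.
by rewrite cylI //; case: ifP => _; [right; exists c | left].
Qed.

Lemma level_cylinders_gen : measurable = <<s level_cylinders >>.
Proof.
apply/seteqP; split; last first.
  apply: smallest_sub; first exact: sigma_algebra_measurable.
  by move=> _ [->|[b [_ _ ->]]]; [exact: measurable0 | exact: measurable_cyl].
apply: smallest_sub; first exact: smallest_sigma_algebra.
move=> _ [_ [l [a [_ [_ ->]]]]].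
pose M := maxn (size a) K.
have -> : cyl a = [set w : Omega | take (size a) (prefix w M) = a].
  by apply/seteqP; split => w; rewrite /cyl /= take_prefix // leq_maxl.
rewrite (prefix_setE M (fun p => take (size a) p = a)).
apply: (countable_bigcup_measurable (T := g_sigma_algebraType level_cylinders)).
move=> b [_ sb]; have [pb|npb] := boolP (gt_path b); last first.
  by rewrite cyl_non_path //; exact: sub_sigma_algebra; left.
by apply: sub_sigma_algebra; right; exists b; rewrite sb leq_maxr.
Qed.

Definition level_cover (k : nat) : set OmegaC :=
  if unpickle k is Some b then
    if gt_path b && (size b == K) then cyl b else set0
  else set0.

Lemma level_cover_cylinders k : level_cylinders (level_cover k).
Proof.
rewrite /level_cover; case: unpickle => [b|]; last by left.
by case: ifP => [/andP [pb /eqP sb]|_]; [right; exists b; rewrite sb | left].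
Qed.

Lemma bigcup_level_cover : \bigcup_k level_cover k = setT.
Proof.
apply/seteqP; split => // w _; exists (pickle (prefix w K)) => //.
rewrite /level_cover pickleK gt_path_prefix size_Omega_prefix eqxx.
exact: cyl_prefix.
Qed.

End LevelCylinders.

Definition relabel_density (R : realType) (q : R) K
    (F : seq (seq int) -> seq (seq int)) (w : Omega) : R :=
  wpath q (F (prefix w K)) / wpath q (prefix w K).

Lemma relabel_density_ge0 (R : realType) (q : R) K F w : 0 < q ->
  0 <= relabel_density q K F w.
Proof. by move=> q0; apply: divr_ge0; apply: ltW; exact: wpath_gt0. Qed.

Section RelabelDensity.
Variables (R : realType) (q : R) (P : probability OmegaC R).
Variables (K : nat) (F G : seq (seq int) -> seq (seq int)).
Hypotheses (q_gt0 : 0 < q) (hP : q_central q P) (hFG : level_bijection K F G).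

Let hF : level_preserving K F. Proof. by case: hFG. Qed.
Let hG : level_preserving K G. Proof. by case: hFG. Qed.

Let density (A : set OmegaC) : \bar R :=
  (\int[P]_(w in A) (relabel_density q K F w)%:E)%E.

Let measurable_density : measurable_fun setT (fun w : OmegaC => (relabel_density q K F w)%:E).
Proof. exact: (measurable_fun_prefix K (fun p => (wpath q (F p) / wpath q p)%:E)). Qed.

Let density0 : density set0 = 0%E.
Proof. exact: integral_set0. Qed.

Let density_ge0 A : (0 <= density A)%E.
Proof. by apply: integral_ge0 => w _; rewrite lee_fin relabel_density_ge0. Qed.

Let density_sigma_additive : semi_sigma_additive density.
Proof.
apply: semi_sigma_additive_nng_induced; first exact: measurable_density.
by move=> w; rewrite lee_fin relabel_density_ge0.
Qed.

HB.instance Definition _ := isMeasure.Build _ _ _ density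
  density0 density_ge0 density_sigma_additive.

HB.instance Definition _ := isMeasurableFun.Build _ _ OmegaC OmegaC
  (relabel K G : OmegaC -> OmegaC) (measurable_relabel hG).

Lemma preimage_relabel_cyl b : gt_path b -> (K <= size b)%N ->
  relabel K G @^-1` cyl b = cyl (F (take K b) ++ drop K b).
Proof.
have [_ _ GF FG] := hFG.
move=> pb Kb; set t := take K b; set r := drop K b.
have st : size t = K by rewrite size_takel.
have [_ sFt _] := hF (gt_path_take K pb) st.
have sFtr : size (F t ++ r) = size b by rewrite size_cat sFt size_drop; lia.
apply/seteqP; split => w; rewrite /cyl /= prefix_relabel // sFtr;
  set p := prefix w (size b); have pK : prefix w K = take K p by rewrite take_prefix.
- have [_ sG _] := hG (gt_path_prefix w K) (size_Omega_prefix w K).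
  rewrite take_oversize ?sG // => h.
  have -> : t = G (prefix w K) by rewrite /t -h take_size_cat.
  have -> : r = drop K p by rewrite /r -h drop_size_cat.
  by rewrite FG ?gt_path_prefix ?size_Omega_prefix // pK cat_take_drop.
- move=> e; rewrite pK e take_size_cat // GF ?gt_path_take //.
  by rewrite take_oversize ?st // drop_size_cat // cat_take_drop.
Qed.

Lemma distribution_relabel_cyl b : gt_path b -> (K <= size b)%N ->
  distribution P (relabel K G : OmegaC -> OmegaC) (cyl b) = density (cyl b).
Proof.
move=> pb Kb; set t := take K b; set r := drop K b.
have st : size t = K by rewrite size_takel.
have [pFt sFt lFt] := hF (gt_path_take K pb) st.
have pFtr : gt_path (F t ++ r).
  by rewrite /gt_path cat_path; apply/andP; split; [|rewrite lFt; exact: gt_path_drop].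
have sFtr : size (F t ++ r) = size b by rewrite size_cat sFt size_drop; lia.
have lFtr : last [::] (F t ++ r) = last [::] b.
  by rewrite last_cat lFt -last_cat cat_take_drop.
rewrite /distribution /pushforward preimage_relabel_cyl //.
rewrite (q_central_cyl q_gt0 hP pb pFtr (esym sFtr) (esym lFtr)).
rewrite /density (eq_integral (cst (wpath q (F t) / wpath q t)%:E)); last first.
  by move=> w; rewrite inE /cyl /= => wb; rewrite /relabel_density -(take_prefix w Kb) wb.
have -> : wpath q (F t ++ r) / wpath q b = wpath q (F t) / wpath q t.
  by rewrite -(wpath_cat_ratio q_gt0 r lFt) /t /r cat_take_drop.
by rewrite integral_cst //; exact: measurable_cyl.
Qed.

Theorem relabel_image_measure (E : set OmegaC) : measurable E ->
  P (relabel K F @` E) = (\int[P]_(w in E) (relabel_density q K F w)%:E)%E.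
Proof.
move=> mE; rewrite (relabel_image _ hFG).
change (distribution P (relabel K G : OmegaC -> OmegaC) E = density E).
apply: (measure_unique (level_cylinders K) (level_cover K)) => //.
- exact: level_cylinders_gen.
- exact: level_cylinders_setI.
- exact: level_cover_cylinders.
- exact: bigcup_level_cover.
- move=> _ [->|[b [pb Kb ->]]]; last exact: distribution_relabel_cyl.
  by rewrite !measure0.
- move=> k; rewrite -ge0_fin_numE ?measure_ge0 //; apply: fin_num_measure.
  by case: (level_cover_cylinders K k) => [->|[b [_ _ ->]]]; [exact: measurable0|exact: measurable_cyl].
Qed.

End RelabelDensity.

Definition level_map (S : seq int -> seq (seq int) -> seq (seq int)) b :=
  S (last [::] b) b.

Section LevelMap.
Variable K : nat.
Implicit Type S : seq int -> seq (seq int) -> seq (seq int).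

Lemma level_path b : gt_path b -> size b = K ->
  is_sign K (last [::] b) /\ paths_to K (last [::] b) b.
Proof. by move=> pb <-; split; [exact: gt_path_sign | exact: gt_path_paths_to]. Qed.

Lemma level_map_preserving S :
  (forall l, is_sign K l -> set_bij (paths_to K l) (paths_to K l) (S l)) ->
  level_preserving K (level_map S).
Proof.
move=> hS b pb sb; have [sl Pb] := level_path pb sb; have [f _ _] := hS _ sl.
by have [? ? ?] := paths_toP (f _ Pb).
Qed.

Lemma level_map_bijection S :
  (forall l, is_sign K l -> set_bij (paths_to K l) (paths_to K l) (S l)) ->
  level_bijection K (level_map S)
    (level_map (fun l => 'pinv_id (paths_to K l) (S l))).
Proof.
move=> hS; have hSinv l : is_sign K l ->
    set_bij (paths_to K l) (paths_to K l) ('pinv_id (paths_to K l) (S l)).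
  by move=> sl; apply: bijpinv_bij; exact: hS.
have hF := level_map_preserving hS; have hG := level_map_preserving hSinv.
split => // b pb sb; have [sl Pb] := level_path pb sb; have [_ inj surj] := hS _ sl.
- have [_ _ lF] := hF b pb sb.
  by rewrite {1}/level_map lF /level_map pinvKV // inE.
- have [_ _ lG] := hG b pb sb.
  by rewrite {1}/level_map lG /level_map (surjpK _ surj) // inE.
Qed.

End LevelMap.

Lemma SN_relabel K h : SN K h ->
  exists F G, level_bijection K F G /\ h = relabel K F.
Proof.
elim=> {h} [|g [l [s [sl [sb [act fixl]]]]]|g h _ [F1 [G1 [bij1 ->]]] _ [F2 [G2 [bij2 ->]]]
           |g h _ [F [G [bij ->]]] gh hg].
- exists id, id; split; last by apply: funext => w; rewrite relabel_id.
  by split => // b pb sb.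
- pose S l' := if l' == l then s else id.
  have hS l' : is_sign K l' -> set_bij (paths_to K l') (paths_to K l') (S l').
    by rewrite /S; case: eqP => [-> //|_ _]; split => // b Pb; exists b.
  have [hF _ _ _] := level_map_bijection hS.
  exists (level_map S), (level_map (fun l => 'pinv_id (paths_to K l) (S l))).
  split; first exact: level_map_bijection.
  apply: relabelE => // w; rewrite /level_map /S last_prefix.
  by case: eqP => [/act //|/fixl ->].
- have [hF1 hG1 GF1 FG1] := bij1; have [hF2 hG2 GF2 FG2] := bij2.
  exists (F1 \o F2), (G2 \o G1); split; last first.
    by apply: funext => w /=; rewrite relabel_comp.
  split; try exact: level_preserving_comp.
  + by move=> b pb sb /=; have [? ? _] := hF2 _ pb sb; rewrite GF1 ?GF2.
  + by move=> b pb sb /=; have [? ? _] := hG1 _ pb sb; rewrite FG2 ?FG1.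
- have [hF hG GF FG] := bij; have bij' : level_bijection K G F by [].
  exists G, F; split => //; apply: funext => w.
  by rewrite -[w in h w](relabelK bij') hg.
Qed.

Lemma fsbig_paths_to_indic (R : realType) N l (c : seq (seq int) -> R) (w : Omega) :
  \sum_(a \in paths_to N l) c a * \1_(cyl a) w =
  if l == vert w N then c (prefix w N) else 0.
Proof.
have Pw a : paths_to N l a -> cyl a w -> a = prefix w N /\ l = vert w N.
  case/paths_toP => _ <- <- wa; rewrite /cyl /= in wa.
  by split; [rewrite wa | rewrite -[in LHS]wa last_prefix].
case: eqP => [el|nl].
- rewrite -(fsbig_widen [set prefix w N]) ?fsbig_set1.
  + by rewrite indicE mem_set ?mulr1 //; exact: cyl_prefix.
  + move=> _ ->; have := gt_path_paths_to (gt_path_prefix w N).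
    by rewrite size_Omega_prefix last_prefix el.
  + move=> a [Pa na]; rewrite /= indicE memNset ?mulr0 // => wa.
    by apply: na; have [] := Pw a Pa wa.
- rewrite -(fsbig_widen set0) ?fsbig_set0 // => a [Pa _].
  by rewrite /= indicE memNset ?mulr0 // => wa; apply: nl; have [] := Pw a Pa wa.
Qed.

Lemma fsbig_level_indic (R : realType) (q : R) N gl (w : Omega) :
  \sum_(l \in [set l | is_sign N l]) \sum_(a \in paths_to N l)
     (wpath q (gl l a) / wpath q a) * \1_(cyl a) w =
  relabel_density q N (level_map gl) w.
Proof.
under eq_fsbigr do rewrite fsbig_paths_to_indic.
have sw : is_sign N (vert w N).
  by have := gt_path_sign (gt_path_prefix w N); rewrite size_Omega_prefix last_prefix.
rewrite -(fsbig_widen [set vert w N]) ?fsbig_set1 ?eqxx //.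
- by rewrite /relabel_density /level_map last_prefix.
- by move=> _ ->.
- by move=> l [_ /eqP nl]; rewrite /= ifN.
Qed.

Theorem level_RN_deriv (R : realType) (q : R) (P : probability OmegaC R) N
    (g : Omega -> Omega) gl : 0 < q -> q_central q P ->
  (forall l, is_sign N l ->
     set_bij (paths_to N l) (paths_to N l) (gl l) /\ acts_on_level N l (gl l) g) ->
  is_RN_deriv P g (fun w => \sum_(l \in [set l | is_sign N l])
    \sum_(a \in paths_to N l) (wpath q (gl l a) / wpath q a) * \1_(cyl a) w).
Proof.
move=> q0 hP H; have hS l sl := (H l sl).1.
have bij := level_map_bijection hS; have [hF _ _ _] := bij.
have -> : g = relabel N (level_map gl).
  apply: relabelE => // w; have := gt_path_sign (gt_path_prefix w N).
  rewrite size_Omega_prefix last_prefix /level_map => sw.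
  by rewrite last_prefix; exact: (H _ sw).2.
have /funext -> := fsbig_level_indic q N gl.
split; [|split].
- exact: (measurable_fun_prefix N (fun p => wpath q (level_map gl p) / wpath q p)).
- by move=> w; exact: relabel_density_ge0.
- by move=> E; exact: (relabel_image_measure q0 hP bij).
Qed.

(** * The ratio set *)

Lemma ler_wiXz2l (R : realFieldType) (s : R) (m n : int) :
  0 < s -> s <= 1 -> m <= n -> s ^ n <= s ^ m.
Proof.
move=> s0 s1 mn; have -> : n = m + `|n - m|%N by rewrite gez0_abs ?subr_ge0 //; lia.
rewrite expfzDr ?gt_eqF //; apply: ler_piMr; first exact: exprz_ge0 (ltW s0).
by rewrite -exprnP exprn_ile1 // ltW.
Qed.

Lemma exists_expr_lt (R : realType) (s r : R) : 0 <= s -> s < 1 -> 0 < r ->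
  exists k : nat, s ^+ k < r.
Proof.
move=> s0 s1 r0; have s1' : `|s| < 1 by rewrite ger0_norm.
have [N _ HN] := @cvgr_lt R nat \oo _ _ 0 (cvg_expr s1') r r0.
by exists N; exact: (HN N (leqnn N)).
Qed.

Section Bracket.
Variables (R : realType) (s : R).
Hypotheses (s_gt0 : 0 < s) (s_lt1 : s < 1).

Lemma exprz_bracket (r : R) : 0 < r -> exists n : int, s ^ (n + 1) < r <= s ^ n.
Proof.
move=> r0; have [k sk] := exists_expr_lt (ltW s_gt0) s_lt1 r0.
have [j sj] : exists j : nat, s ^+ j < r^-1.
  by apply: exists_expr_lt; rewrite ?invr_gt0 // ltW.
pose below m := s ^ (m%:Z - j%:Z) < r.
have ex_below : exists m, below m.
  by exists (j + k)%N; rewrite /below PoszD addrAC subrr add0r.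
case: (ex_minnP ex_below) => m bm minm.
case: m bm minm => [|m] bm minm.
  move: bm; rewrite /below sub0r -invr_expz ltNge => /negP []; apply: ltW.
  by rewrite -[r]invrK ltf_pV2 ?posrE ?invr_gt0 ?exprz_gt0.
exists (m%:Z - j%:Z); apply/andP; split.
  by move: bm; rewrite /below -addn1 PoszD addrAC.
by rewrite leNgt; apply/negP => /minm; rewrite ltnn.
Qed.

Lemma exprz_apart (r : R) : 0 < r -> (forall n : int, r != s ^ n) ->
  exists2 eps, 0 < eps & forall n : int, eps < `|s ^ n - r|.
Proof.
move=> r0 rs; have [n0 /andP [lo hi]] := exprz_bracket r0.
have {}hi : r < s ^ n0 by rewrite lt_neqAle rs.
pose d := Num.min (s ^ n0 - r) (r - s ^ (n0 + 1)).
have d0 : 0 < d by rewrite lt_min !subr_gt0 lo hi.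
exists (d / 2); first by rewrite divr_gt0.
move=> n; apply: (@lt_le_trans _ _ d); first by rewrite ltr_pdivrMr // ltr_pMr // ltr1n.
have [nn0|n0n] := lerP n n0.
  have sn := ler_wiXz2l s_gt0 (ltW s_lt1) nn0.
  by rewrite ger0_norm ?subr_ge0 ?(le_trans (ltW hi)) // /d ge_min lerD2r sn.
have sn : s ^ n <= s ^ (n0 + 1) by apply: ler_wiXz2l; [|exact: ltW|rewrite lezD1].
rewrite ler0_norm ?opprB; last by rewrite subr_le0 (le_trans sn) // ltW.
by rewrite /d ge_min lerD2l lerN2 sn orbT.
Qed.

End Bracket.

Lemma exprz2_apart (R : realType) (q r : R) : 0 < q -> q < 1 -> 0 < r ->
    (forall n : int, r <> q ^ (2 * n)) ->
  exists2 eps, 0 < eps & forall n : int, eps < `|q ^ (2 * n) - r|.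
Proof.
move=> q0 q1 r0 not_pow.
have q2_gt0 : 0 < q ^ 2%:Z by exact: exprz_gt0.
have q2_lt1 : q ^ 2%:Z < 1 by rewrite -exprnP exprn_ilt1 // ltW.
have r_not_pow n : r != (q ^ 2%:Z) ^ n by apply/eqP; rewrite exprz_exp; exact: not_pow.
have [eps eps0 apart] := exprz_apart q2_gt0 q2_lt1 r0 r_not_pow.
by exists eps => // n; rewrite -exprz_exp.
Qed.

Section MeasureFacts.
Context d (T : measurableType d) (R : realType) (mu : {measure set T -> \bar R}).

Lemma measure_gt0_bigcup_countable (U : countType) (E : U -> set T) (B : set T) :
  measurable B -> (forall i, measurable (E i)) -> B `<=` \bigcup_i E i ->
  (0 < mu B)%E -> exists i, (0 < mu (E i))%E.
Proof.
move=> mB mE BE; apply: contraPP => /forallNP E0; apply/negP; rewrite -leNgt.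
have null i : mu.-negligible (E i).
  exists (E i); split => //; apply/eqP.
  by rewrite eq_le measure_ge0 andbT leNgt; exact/negP/E0.
pose E' n := if unpickle n is Some i then E i else set0.
have [N [mN N0 EN]] : mu.-negligible (\bigcup_n E' n).
  apply: negligible_bigcup => n; rewrite /E'.
  by case: unpickle => [i|]; [exact: null | exact: negligible_set0].
rewrite -N0 le_measure ?inE // => x /BE [i _ Eix].
by apply: EN; exists (pickle i) => //; rewrite /E' pickleK.
Qed.

Lemma integral_mean_dist_le (E : set T) (f : T -> R) (c r e : R) :
  measurable E -> measurable_fun E f -> (forall x, E x -> 0 <= f x) ->
  0 <= e <= r -> (0 < mu E < +oo)%E -> {ae mu, forall x, E x -> `|f x - r| < e} ->
  (\int[mu]_(x in E) (f x)%:E = c%:E * mu E)%E -> `|c - r| <= e.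
Proof.
move=> mE mf f0 /andP [e0 er] /andP [muE0 muEoo] near intf.
have Ep : mu E = (fine (mu E))%:E by rewrite fineK // ge0_fin_numE ?measure_ge0.
have p0 : 0 < fine (mu E) by rewrite -lte_fin -Ep.
have mfE : measurable_fun E (fun x => (f x)%:E) by exact/measurable_EFinP.
have intc (k : R) : (\int[mu]_(x in E) (cst k%:E) x = k%:E * mu E)%E.
  exact: integral_cst.
rewrite ler_distl; apply/andP; split.
- suff : ((r - e)%:E * mu E <= c%:E * mu E)%E.
    by rewrite Ep -!EFinM lee_fin ler_pM2r.
  rewrite -(intc (r - e)) -intf; apply: ae_ge0_le_integral => //.
  + by move=> x _; rewrite lee_fin subr_ge0.
  + apply: filterS near => x h Ex; rewrite lee_fin.
    by have := h Ex; rewrite ltr_distl => /andP [/ltW].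
- suff : (c%:E * mu E <= (r + e)%:E * mu E)%E.
    by rewrite Ep -!EFinM lee_fin ler_pM2r.
  rewrite -(intc (r + e)) -intf; apply: ae_ge0_le_integral => //.
  + by move=> x _; rewrite lee_fin addr_ge0 // (le_trans e0).
  + apply: filterS near => x h Ex; rewrite lee_fin.
    by have := h Ex; rewrite ltr_distl => /andP [_ /ltW].
Qed.

End MeasureFacts.

Definition transp (T : eqType) (a b x : T) : T :=
  if x == a then b else if x == b then a else x.

Lemma transpK (T : eqType) (a b : T) : involutive (transp a b).
Proof.
move=> x; rewrite /transp.
have [->|xa] := eqVneq x a; first by rewrite eqxx; case: eqVneq.
have [->|xb] := eqVneq x b; first by rewrite eqxx.
by rewrite (negPf xa) (negPf xb).
Qed.

Definition coterminal (a b : seq (seq int)) : bool :=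
  [&& gt_path a, gt_path b, size a == size b & last [::] a == last [::] b].

Lemma transp_bijection a b : coterminal a b ->
  level_bijection (size a) (transp a b) (transp a b).
Proof.
case/and4P => pa pb /eqP sab /eqP lab.
have hT : level_preserving (size a) (transp a b).
  by move=> c pc sc; rewrite /transp; do 2?case: eqP => [->|_]; split.
by split => // c _ _; rewrite transpK.
Qed.

Definition swap_piece (g : OmegaC -> OmegaC) (B : set OmegaC)
    (p : seq (seq int) * seq (seq int)) : set OmegaC :=
  if coterminal p.1 p.2 then
    B `&` cyl p.1 `&` [set w | g w = relabel (size p.1) (transp p.1 p.2) w]
  else set0.

Lemma measurable_swap_piece g B p : measurable B -> measurable_fun setT g ->
  measurable (swap_piece g B p).
Proof.
move=> mB mg; rewrite /swap_piece; case: ifP => [ab|_]; last exact: measurable0.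
have [hT _ _ _] := transp_bijection ab.
apply: measurableI; first by apply: measurableI => //; exact: measurable_cyl.
by apply: measurable_eq_fun => //; exact: measurable_relabel.
Qed.

Lemma full_group_swap_cover g B : full_group g ->
  B `<=` \bigcup_p swap_piece g B p.
Proof.
case=> _ gS w Bw; have [h [[M hM] gw]] := gS w.
have [F [G [[hF _ _ _] hF_eq]]] := SN_relabel hM.
have [pF sF lF] := hF _ (gt_path_prefix w M) (size_Omega_prefix w M).
exists (prefix w M, F (prefix w M)) => //.
rewrite /swap_piece /coterminal /= gt_path_prefix pF sF lF size_Omega_prefix !eqxx.
split; first by split => //; exact: cyl_prefix.
by rewrite /= gw hF_eq /relabel /transp eqxx.
Qed.

Lemma RN_deriv_swap_piece (R : realType) (q : R) (P : probability OmegaC R)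
    g f B a b : 0 < q -> q_central q P -> is_RN_deriv P g f -> coterminal a b ->
  measurable B -> measurable_fun setT g ->
  (\int[P]_(w in swap_piece g B (a, b)) (f w)%:E =
     (wpath q b / wpath q a)%:E * P (swap_piece g B (a, b)))%E.
Proof.
move=> q0 hP [_ [_ RN]] ab mB mg; have mE := measurable_swap_piece (a, b) mB mg.
rewrite -RN //; move: mE; rewrite /swap_piece ab /= => mE.
rewrite (eq_imagel (f' := relabel (size a) (transp a b))); last by move=> w [].
rewrite (relabel_image_measure q0 hP (transp_bijection ab)) // -integral_cst //.
apply: eq_integral => w; rewrite inE => -[[_ wa] _].
by rewrite /relabel_density wa /transp eqxx.
Qed.

Theorem ratio_set_sub_powers (R : realType) (q : R) (P : probability OmegaC R) :
  0 < q -> q < 1 -> q_central q P ->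
  ratio_set P `<=` [set r | r = 0 \/ exists n : int, r = q ^ (2 * n)].
Proof.
move=> q0 q1 hP r [r0 hr]; have [->|rn0] := eqVneq r 0; [by left | right].
have r_gt0 : 0 < r by rewrite lt0r rn0.
apply: contrapT => /forallNP not_pow.
have [eps eps0 apart] := exprz2_apart q0 q1 r_gt0 not_pow.
pose e := Num.min eps (r / 2).
have e0 : 0 < e by rewrite lt_min eps0 divr_gt0.
have e_le_r : e <= r by rewrite ge_min ler_pdivrMr // ler_pMr // ler1n orbT.
have PT : (0 < P setT)%E by rewrite probability_setT lte_fin ltr01.
have [B [g [f [mB [PB [_ [fg [_ [hRN near]]]]]]]]] := hr e e0 setT measurableT PT.
have mg := fg.1.
have [[a b] Pab] := measure_gt0_bigcup_countable mB
  (fun p => measurable_swap_piece p mB mg) (full_group_swap_cover fg) PB.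
have ab : coterminal a b.
  by move: Pab; rewrite /swap_piece; case: ifP => // _; rewrite measure0 ltxx.
have dist : `|wpath q b / wpath q a - r| <= e.
  have [mf [f0 _]] := hRN.
  apply: (@integral_mean_dist_le _ _ _ P (swap_piece g B (a, b)) f).
  - exact: measurable_swap_piece.
  - exact: measurable_funTS.
  - by move=> w _; exact: f0.
  - by rewrite (ltW e0) e_le_r.
  - rewrite Pab -ge0_fin_numE ?measure_ge0 //.
    by apply: fin_num_measure; exact: measurable_swap_piece.
  - by apply: filterS near => w Bw; rewrite /swap_piece ab => -[[/Bw]].
  - exact: (RN_deriv_swap_piece q0 hP hRN ab mB mg).
case/and4P: ab => pa pb /eqP sab /eqP lab.
have := apart (\sum_(x <- b) absl x - \sum_(x <- a) absl x).
by rewrite -(wpath_ratio q0 pa pb sab lab) ltNge (le_trans dist) // ge_min lexx.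
Qed.

Theorem lemma4p1 (R : realType) (q : R) (hq0 : 0 < q) (hq1 : q < 1)
  (P : probability OmegaC R) (hP : q_central q P)
  (N : nat) (hN : (1 <= N)%N) (g : Omega -> Omega) (hg : SN N g) :
  (forall gl : seq int -> seq (seq int) -> seq (seq int),
     (forall l, is_sign N l ->
        set_bij (paths_to N l) (paths_to N l) (gl l) /\ acts_on_level N l (gl l) g) ->
     is_RN_deriv P g
       (fun w => \sum_(l \in [set l | is_sign N l])
                   \sum_(a \in paths_to N l)
                     (wpath q (gl l a) / wpath q a) * \1_(cyl a) w))
  /\
  ratio_set P `<=` [set r | r = 0 \/ exists n : int, r = q ^ (2 * n)].
Proof.
split; last exact: ratio_set_sub_powers.
by move=> gl H; exact: level_RN_deriv.
Qed.
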